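(* Realize $\mathfrak{h}_3$ as the strictly upper triangular real $3\times3$ matrices, and write $M(x,y,z)$ for the matrix with entries $x$ at position $(1,2)$, $y$ at $(2,3)$, $z$ at $(1,3)$. For every $a\in\mathbb{R}$ and every continuous sublinear function $c:\mathbb{R}\to\mathbb{R}$, the function defined for $x\ne0$ by \[\zeta(M(x,y,z))=c(y/x)\cdot x+a\cdot y\] extends continuously to an $\mathrm{Ad}$-invariant Lie quasi-state on $\mathfrak{h}_3$ (with $\zeta(M(0,y,z))=a y$). Conversely, every continuous $\mathrm{Ad}$-invariant Lie quasi-state on $\mathfrak{h}_3$ is of this form.
   Context: A Lie quasi-state is $\zeta:\mathfrak{g}\to\mathbb{R}$ with $\zeta(aX+bY)=a\zeta(X)+b\zeta(Y)$ for all $a,b\in\mathbb{R}$ and commuting $X,Y$. $\mathrm{Ad}$-invariant means invariant under the adjoint group. A function $c:\mathbb{R}\to\mathbb{R}$ is sublinear if $c(s)/|s|\to0$ as $|s|\to\infty$. *)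

From Stdlib Require Import Reals Lra.
Open Scope R_scope.

(* Real 3x3 matrices, indices 0,1,2 (entries outside are irrelevant). *)
Definition Mat3 := nat -> nat -> R.

Definition mmul (A B : Mat3) : Mat3 :=
  fun i j => A i 0%nat * B 0%nat j + A i 1%nat * B 1%nat j + A i 2%nat * B 2%nat j.

Definition mat_eq (A B : Mat3) : Prop :=
  forall i j, (i < 3)%nat -> (j < 3)%nat -> A i j = B i j.

Definition id3 : Mat3 := fun i j => if Nat.eqb i j then 1 else 0.

Definition madd (A B : Mat3) : Mat3 := fun i j => A i j + B i j.

(* M(x,y,z): x at (1,2), y at (2,3), z at (1,3) (1-based), i.e.
   (0,1), (1,2), (0,2) 0-based; zero elsewhere. *)
Definition M (x y z : R) : Mat3 :=
  fun i j =>
    match i, j with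
    | 0%nat, 1%nat => x
    | 1%nat, 2%nat => y
    | 0%nat, 2%nat => z
    | _, _ => 0
    end.

(* h_3 = strictly upper triangular real 3x3 matrices, coordinatised by (x,y,z). *)
Record h3 := mkh3 { hx : R; hy : R; hz : R }.

Definition toM (X : h3) : Mat3 := M (hx X) (hy X) (hz X).

Definition h3_lin (a : R) (X : h3) (b : R) (Y : h3) : h3 :=
  mkh3 (a * hx X + b * hx Y) (a * hy X + b * hy Y) (a * hz X + b * hz Y).

Definition commute3 (X Y : h3) : Prop :=
  mat_eq (mmul (toM X) (toM Y)) (mmul (toM Y) (toM X)).

Definition lie_quasi_state (zeta : h3 -> R) : Prop :=
  forall (a b : R) (X Y : h3), commute3 X Y ->
    zeta (h3_lin a X b Y) = a * zeta X + b * zeta Y.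

(* The adjoint group of h_3 is {Ad_g : g in H_3}, H_3 = upper unitriangular
   matrices g = I + M(p,q,r); Ad_g X = g X g^{-1}, i.e. Y = Ad_g X iff Y g = g X. *)
Definition Ad_invariant (zeta : h3 -> R) : Prop :=
  forall (p q r : R) (X Y : h3),
    let g := madd id3 (M p q r) in
    mat_eq (mmul (toM Y) g) (mmul g (toM X)) ->
    zeta Y = zeta X.

Definition continuous_h3 (zeta : h3 -> R) : Prop :=
  forall (X : h3) (eps : R), 0 < eps ->
    exists delta, 0 < delta /\
      forall Y : h3,
        Rabs (hx Y - hx X) < delta -> Rabs (hy Y - hy X) < delta ->
        Rabs (hz Y - hz X) < delta ->
        Rabs (zeta Y - zeta X) < eps.

Definition sublinear (c : R -> R) : Prop :=
  forall eps : R, 0 < eps ->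
    exists N : R, forall s : R, N < Rabs s -> Rabs (c s / Rabs s) < eps.

(* Commuting elements of h_3 have proportional (x, y)-parts, and Ad_g moves
   (x, y, z) only to (x, y, z + p y - q x); the centre (0, 0, z) is a difference
   of the Ad-conjugate elements (1, 0, z) and (1, 0, 0).  Hence Ad-invariant
   quasi-states are exactly the functions that ignore z and are linear along each
   line of the (x, y)-plane, and so are the functions c (y / x) x + a y.  Such a
   function is determined by a = zeta (0, 1, 0) and c s = zeta (1, s, 0) - a s,
   and continuity at the axis x = 0 matches sublinearity of c because
   c s / |s| = +-(zeta (1/s, 1, 0) - a). *)

From Stdlib Require Import Reals Lra Lia Psatz.
Open Scope R_scope.

Lemma commute3_mkh3 x y z x' y' z' :
  commute3 (mkh3 x y z) (mkh3 x' y' z') <-> x * y' = x' * y.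
Proof.
  split.
  - intros H. specialize (H 0%nat 2%nat ltac:(lia) ltac:(lia)).
    unfold mmul, toM, M in H; simpl in H. lra.
  - intros H i j Hi Hj.
    destruct i as [|[|[|i]]]; try lia; destruct j as [|[|[|j]]]; try lia;
      unfold mmul, toM, M; simpl; lra.
Qed.

Lemma Ad_preserves_xy p q r X Y :
  mat_eq (mmul (toM Y) (madd id3 (M p q r))) (mmul (madd id3 (M p q r)) (toM X)) ->
  hx Y = hx X /\ hy Y = hy X.
Proof.
  intros H.
  pose proof (H 0%nat 1%nat ltac:(lia) ltac:(lia)) as H01.
  pose proof (H 1%nat 2%nat ltac:(lia) ltac:(lia)) as H12.
  unfold mmul, toM, M, madd, id3 in H01, H12; simpl in H01, H12. lra.
Qed.

Lemma Ad_shear x y z p q :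
  let g := madd id3 (M p q 0) in
  mat_eq (mmul (toM (mkh3 x y (z + p * y - q * x))) g) (mmul g (toM (mkh3 x y z))).
Proof.
  intros g i j Hi Hj.
  destruct i as [|[|[|i]]]; try lia; destruct j as [|[|[|j]]]; try lia;
    unfold g, mmul, toM, M, madd, id3; simpl; ring.
Qed.

Lemma proportional_common_direction x y x' y' :
  x * y' = x' * y ->
  exists u v s t, x = s * u /\ y = s * v /\ x' = t * u /\ y' = t * v.
Proof.
  intros Hxy.
  destruct (Req_dec (x * x + y * y) 0) as [H0|H0].
  - exists x', y', 0, 1. repeat split; try ring; nra.
  - exists x, y, 1, ((x * x' + y * y') / (x * x + y * y)).
    assert (Ex : x' * (x * x + y * y) - (x * x' + y * y') * x = y * (x' * y - x * y')) by ring.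
    assert (Ey : y' * (x * x + y * y) - (x * x' + y * y') * y = x * (x * y' - x' * y)) by ring.
    rewrite Hxy, Rminus_diag, Rmult_0_r in Ex, Ey.
    repeat split; try ring; apply (Rmult_eq_reg_r (x * x + y * y)); auto; field_simplify; lra.
Qed.

Definition planar_homogeneous (f : h3 -> R) : Prop :=
  forall l x y z w, f (mkh3 (l * x) (l * y) z) = l * f (mkh3 x y w).

Definition profile (f : h3 -> R) (s : R) : R := f (mkh3 1 s 0) - f (mkh3 0 1 0) * s.

Section PlanarHomogeneous.
Variable f : h3 -> R.
Hypothesis f_planar : planar_homogeneous f.

Lemma planar_homogeneous_z x y z w : f (mkh3 x y z) = f (mkh3 x y w).
Proof.
  pose proof (f_planar 1 x y z w) as H. rewrite !Rmult_1_l in H. exact H.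
Qed.

Lemma planar_homogeneous_quasi_state : lie_quasi_state f.
Proof.
  intros a b [x y z] [x' y' z'] HC. apply commute3_mkh3 in HC.
  destruct (proportional_common_direction _ _ _ _ HC) as (u & v & s & t & -> & -> & -> & ->).
  unfold h3_lin; simpl.
  replace (a * (s * u) + b * (t * u)) with ((a * s + b * t) * u) by ring.
  replace (a * (s * v) + b * (t * v)) with ((a * s + b * t) * v) by ring.
  rewrite !(f_planar _ u v _ 0). ring.
Qed.

Lemma planar_homogeneous_Ad_invariant : Ad_invariant f.
Proof.
  intros p q r [x y z] [x' y' z'] g HAd.
  destruct (Ad_preserves_xy _ _ _ _ _ HAd) as [Ex Ey]; simpl in Ex, Ey; subst.
  apply planar_homogeneous_z.
Qed.

Lemma planar_homogeneous_on_axis y z : f (mkh3 0 y z) = f (mkh3 0 1 0) * y.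
Proof.
  replace (mkh3 0 y z) with (mkh3 (y * 0) (y * 1) z) by (f_equal; ring).
  rewrite (f_planar _ _ _ _ 0); ring.
Qed.

Lemma planar_homogeneous_off_axis x y z :
  x <> 0 -> f (mkh3 x y z) = profile f (y / x) * x + f (mkh3 0 1 0) * y.
Proof.
  intros Hx.
  replace (mkh3 x y z) with (mkh3 (x * 1) (x * (y / x)) z) by (f_equal; field; auto).
  rewrite (f_planar _ _ _ _ 0); unfold profile; field; auto.
Qed.

End PlanarHomogeneous.

Lemma quasi_state_Ad_invariant_planar_homogeneous f :
  lie_quasi_state f -> Ad_invariant f -> planar_homogeneous f.
Proof.
  intros Hq HAd.
  assert (scale : forall l x y z, f (mkh3 (l * x) (l * y) (l * z)) = l * f (mkh3 x y z)).
  { intros l x y z.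
    replace (mkh3 (l * x) (l * y) (l * z)) with (h3_lin l (mkh3 x y z) 0 (mkh3 x y z))
      by (unfold h3_lin; simpl; f_equal; ring).
    rewrite Hq by (apply commute3_mkh3; ring). ring. }
  assert (shear : forall x y z w, (x <> 0 \/ y <> 0) -> f (mkh3 x y w) = f (mkh3 x y z)).
  { intros x y z w [Hx|Hy].
    - apply (HAd 0 ((z - w) / x) 0).
      replace w with (z + 0 * y - (z - w) / x * x) at 1 by (field; auto).
      apply Ad_shear.
    - apply (HAd ((w - z) / y) 0 0).
      replace w with (z + (w - z) / y * y - 0 * x) at 1 by (field; auto).
      apply Ad_shear. }
  assert (center : forall z, f (mkh3 0 0 z) = 0).
  { intro z.
    replace (mkh3 0 0 z) with (h3_lin 1 (mkh3 1 0 z) (-1) (mkh3 1 0 0))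
      by (unfold h3_lin; simpl; f_equal; ring).
    rewrite Hq by (apply commute3_mkh3; ring).
    rewrite (shear 1 0 0 z) by lra. ring. }
  assert (z_free : forall x y z w, f (mkh3 x y z) = f (mkh3 x y w)).
  { intros x y z w.
    destruct (Req_dec x 0) as [->|Hx]; [destruct (Req_dec y 0) as [->|Hy]|].
    - rewrite !center; reflexivity.
    - apply shear; auto.
    - apply shear; auto. }
  intros l x y z w.
  rewrite (z_free _ _ z (l * w)), scale; reflexivity.
Qed.

Definition continuous_h3_at (f : h3 -> R) (X : h3) : Prop :=
  forall eps, 0 < eps -> exists delta, 0 < delta /\ forall Y,
    Rabs (hx Y - hx X) < delta -> Rabs (hy Y - hy X) < delta ->
    Rabs (hz Y - hz X) < delta -> Rabs (f Y - f X) < eps.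

Lemma continuous_h3_at_hx X : continuous_h3_at hx X.
Proof. intros eps Heps; exists eps; auto. Qed.

Lemma continuous_h3_at_hy X : continuous_h3_at hy X.
Proof. intros eps Heps; exists eps; auto. Qed.

Lemma continuous_h3_at_local f g X r :
  0 < r -> (forall Y, Rabs (hx Y - hx X) < r -> f Y = g Y) ->
  continuous_h3_at g X -> continuous_h3_at f X.
Proof.
  intros Hr Hfg Hg eps Heps.
  destruct (Hg eps Heps) as [d [Hd H]].
  exists (Rmin d r); split; [apply Rmin_pos; auto|].
  intros Y Hx Hy Hz.
  pose proof (Rmin_l d r); pose proof (Rmin_r d r).
  rewrite !Hfg by (rewrite ?Rminus_diag, ?Rabs_R0; lra). apply H; lra.
Qed.

Lemma continuous_h3_at_plus f g X :
  continuous_h3_at f X -> continuous_h3_at g X ->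
  continuous_h3_at (fun Y => f Y + g Y) X.
Proof.
  intros Hf Hg eps Heps.
  destruct (Hf (eps / 2)) as [d1 [Hd1 H1]]; [lra|].
  destruct (Hg (eps / 2)) as [d2 [Hd2 H2]]; [lra|].
  exists (Rmin d1 d2); split; [apply Rmin_pos; auto|].
  intros Y Hx Hy Hz.
  pose proof (Rmin_l d1 d2); pose proof (Rmin_r d1 d2).
  specialize (H1 Y ltac:(lra) ltac:(lra) ltac:(lra)).
  specialize (H2 Y ltac:(lra) ltac:(lra) ltac:(lra)).
  replace (f Y + g Y - (f X + g X)) with ((f Y - f X) + (g Y - g X)) by ring.
  eapply Rle_lt_trans; [apply Rabs_triang | lra].
Qed.

Lemma continuous_h3_at_comp f h X :
  continuous_h3_at f X -> continuity_pt h (f X) ->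
  continuous_h3_at (fun Y => h (f Y)) X.
Proof.
  intros Hf Hh eps Heps.
  destruct (Hh eps Heps) as [al [Hal H1]].
  destruct (Hf al Hal) as [d [Hd H2]].
  exists d; split; auto. intros Y Hx Hy Hz.
  destruct (Req_dec (f Y) (f X)) as [E|N].
  - rewrite E, Rminus_diag, Rabs_R0; auto.
  - apply H1. repeat split; auto. apply H2; auto.
Qed.

Lemma continuity_pt_identity x : continuity_pt id x.
Proof. exact (derivable_continuous_pt _ _ (derivable_pt_id x)). Qed.

Lemma continuous_h3_at_scal k f X :
  continuous_h3_at f X -> continuous_h3_at (fun Y => k * f Y) X.
Proof.
  intros Hf. apply (continuous_h3_at_comp f (fun t => k * t)); auto.
  exact (continuity_pt_scal id k _ (continuity_pt_identity _)).
Qed.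

Lemma continuous_h3_at_mult f g X :
  continuous_h3_at f X -> continuous_h3_at g X ->
  continuous_h3_at (fun Y => f Y * g Y) X.
Proof.
  intros Hf Hg.
  assert (Hsq : forall h, continuous_h3_at h X -> continuous_h3_at (fun Y => h Y * h Y) X).
  { intros h Hh. apply (continuous_h3_at_comp h (fun t => t * t)); auto.
    exact (continuity_pt_mult id id _ (continuity_pt_identity _) (continuity_pt_identity _)). }
  (* polarisation: f g = ((f + g)^2 - (f - g)^2) / 4 *)
  apply (continuous_h3_at_local _
    (fun Y => /4 * ((f Y + g Y) * (f Y + g Y))
              + -/4 * ((f Y + -1 * g Y) * (f Y + -1 * g Y))) X 1); [lra | intros; field |].
  apply continuous_h3_at_plus; apply continuous_h3_at_scal, Hsq;
    apply continuous_h3_at_plus; auto; apply continuous_h3_at_scal; auto.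
Qed.

Lemma continuous_h3_at_inv f X :
  continuous_h3_at f X -> f X <> 0 -> continuous_h3_at (fun Y => / f Y) X.
Proof.
  intros Hf H0. apply (continuous_h3_at_comp f (fun t => / t)); auto.
  exact (continuity_pt_inv id _ (continuity_pt_identity _) H0).
Qed.

Lemma sublinear_affine_bound c :
  continuity c -> sublinear c ->
  forall e, 0 < e -> exists K, 0 <= K /\ forall s, Rabs (c s) <= K + e * Rabs s.
Proof.
  intros Hc Hsub e He.
  destruct (Hsub e He) as [N HN].
  set (N1 := Rmax N 0).
  assert (HN1 : N <= N1 /\ 0 <= N1) by (split; [apply Rmax_l | apply Rmax_r]).
  destruct (continuity_ab_maj (fun t => Rabs (c t)) (- N1) N1) as [m [Hm _]]; [lra | |].
  { intros t _. apply (continuity_pt_comp c Rabs); [apply Hc | apply Rcontinuity_abs]. }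
  exists (Rabs (c m)); split; [apply Rabs_pos|].
  intros s. pose proof (Rabs_pos s).
  assert (0 <= e * Rabs s) by (apply Rmult_le_pos; lra).
  destruct (Rle_lt_dec (Rabs s) N1) as [Hs|Hs].
  - assert (Rabs (c s) <= Rabs (c m)).
    { apply Hm. unfold Rabs in Hs; destruct (Rcase_abs s); lra. }
    lra.
  - specialize (HN s ltac:(lra)).
    unfold Rdiv in HN; rewrite Rabs_mult, Rabs_inv, Rabs_Rabsolu in HN.
    replace (Rabs (c s)) with (Rabs (c s) * / Rabs s * Rabs s) by (field; lra).
    pose proof (Rmult_lt_compat_r (Rabs s) _ _ ltac:(lra) HN).
    pose proof (Rabs_pos (c m)). lra.
Qed.

Lemma Rmult_le_quarter K t eps :
  0 <= K -> 0 <= t -> t <= eps / (4 * (K + 1)) -> K * t <= eps / 4.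
Proof.
  intros HK Ht Hte.
  assert (t * (4 * (K + 1)) <= eps).
  { apply (Rmult_le_compat_r (4 * (K + 1))) in Hte; [|lra].
    replace (eps / (4 * (K + 1)) * (4 * (K + 1))) with eps in Hte by (field; lra).
    exact Hte. }
  nra.
Qed.

Section Model.
Variables (a : R) (c : R -> R) (zeta : h3 -> R).
Hypothesis zeta_off_axis : forall x y z, x <> 0 -> zeta (mkh3 x y z) = c (y / x) * x + a * y.
Hypothesis zeta_on_axis : forall y z, zeta (mkh3 0 y z) = a * y.

Lemma model_planar_homogeneous : planar_homogeneous zeta.
Proof.
  intros l x y z w.
  destruct (Req_dec l 0) as [->|Hl]; [rewrite !Rmult_0_l, zeta_on_axis; ring|].
  destruct (Req_dec x 0) as [->|Hx]; [rewrite Rmult_0_r, !zeta_on_axis; ring|].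
  rewrite !zeta_off_axis by (auto; apply Rmult_integral_contrapositive_currified; auto).
  replace (l * y / (l * x)) with (y / x) by (field; auto). ring.
Qed.

Hypothesis c_continuous : continuity c.
Hypothesis c_sublinear : sublinear c.

Lemma model_continuous_off_axis X : hx X <> 0 -> continuous_h3_at zeta X.
Proof.
  intros Hx.
  apply (continuous_h3_at_local _ (fun Y => c (hy Y * / hx Y) * hx Y + a * hy Y) X (Rabs (hx X))).
  - apply Rabs_pos_lt; auto.
  - intros [x y z] HY; simpl in *. apply zeta_off_axis.
    intros ->. rewrite Rminus_0_l, Rabs_Ropp in HY. lra.
  - apply continuous_h3_at_plus; [apply continuous_h3_at_mult | apply continuous_h3_at_scal].
    + apply (continuous_h3_at_comp (fun Y => hy Y * / hx Y)); [|apply c_continuous].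
      apply continuous_h3_at_mult; [apply continuous_h3_at_hy|].
      apply continuous_h3_at_inv; [apply continuous_h3_at_hx | auto].
    + apply continuous_h3_at_hx.
    + apply continuous_h3_at_hy.
Qed.

(* Near the axis, |c (y / x) * x| <= K |x| + e |y| with e as small as we like. *)
Lemma model_continuous_on_axis y0 z0 : continuous_h3_at zeta (mkh3 0 y0 z0).
Proof.
  intros eps Heps.
  pose proof (Rabs_pos y0). pose proof (Rabs_pos a).
  set (e := eps / (4 * (Rabs y0 + 1))).
  assert (He : 0 < e) by (apply Rdiv_lt_0_compat; lra).
  destruct (sublinear_affine_bound c c_continuous c_sublinear e He) as [K [HK Hbound]].
  set (d := Rmin 1 (Rmin (eps / (4 * (K + 1))) (eps / (4 * (Rabs a + 1))))).
  assert (Hd1 : d <= 1) by apply Rmin_l.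
  assert (HdK : d <= eps / (4 * (K + 1))) by (eapply Rle_trans; [apply Rmin_r | apply Rmin_l]).
  assert (Hda : d <= eps / (4 * (Rabs a + 1))) by (eapply Rle_trans; [apply Rmin_r | apply Rmin_r]).
  exists d; split.
  { repeat apply Rmin_pos; try lra; apply Rdiv_lt_0_compat; lra. }
  intros [x y z] Hx Hy _; simpl in Hx, Hy. rewrite Rminus_0_r in Hx.
  rewrite zeta_on_axis.
  assert (drift : Rabs (a * y - a * y0) <= eps / 4).
  { replace (a * y - a * y0) with (a * (y - y0)) by ring. rewrite Rabs_mult.
    apply Rmult_le_quarter; [apply Rabs_pos | apply Rabs_pos | lra]. }
  destruct (Req_dec x 0) as [->|Hx0]; [rewrite zeta_on_axis; lra|].
  rewrite zeta_off_axis by auto.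
  assert (Hy1 : Rabs y <= Rabs y0 + 1).
  { replace y with (y0 + (y - y0)) by ring.
    eapply Rle_trans; [apply Rabs_triang | lra]. }
  assert (Hcx : Rabs (c (y / x) * x) <= K * Rabs x + e * Rabs y).
  { rewrite Rabs_mult.
    replace (K * Rabs x + e * Rabs y) with ((K + e * Rabs (y / x)) * Rabs x)
      by (unfold Rdiv; rewrite Rabs_mult, Rabs_inv; field; apply Rabs_no_R0; auto).
    apply Rmult_le_compat_r; [apply Rabs_pos | apply Hbound]. }
  assert (Rabs x * K <= eps / 4) by (rewrite Rmult_comm; apply Rmult_le_quarter; [auto | apply Rabs_pos | lra]).
  assert (e * Rabs y <= eps / 4).
  { replace (eps / 4) with (e * (Rabs y0 + 1)) by (unfold e; field; lra).
    apply Rmult_le_compat_l; lra. }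
  replace (c (y / x) * x + a * y - a * y0) with (c (y / x) * x + (a * y - a * y0)) by ring.
  eapply Rle_lt_trans; [apply Rabs_triang | nra].
Qed.

Lemma model_continuous : continuous_h3 zeta.
Proof.
  intros [x y z].
  destruct (Req_dec x 0) as [->|Hx].
  - apply model_continuous_on_axis.
  - apply model_continuous_off_axis; auto.
Qed.

End Model.

Lemma profile_continuous f : continuous_h3 f -> continuity (profile f).
Proof.
  intros Hf s.
  assert (Hline : continuity_pt (fun t => f (mkh3 1 t 0)) s).
  { intros eps Heps. destruct (Hf (mkh3 1 s 0) eps Heps) as [d [Hd H]].
    exists d; split; auto. intros t [_ Ht].
    apply H; simpl; rewrite ?Rminus_diag, ?Rabs_R0; auto. }
  exact (continuity_pt_minus _ (mult_real_fct _ id) s Hline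
           (continuity_pt_scal id _ s (continuity_pt_identity s))).
Qed.

(* profile f s = s * (f (1/s, 1, 0) - f (0, 1, 0)), and 1/s -> 0. *)
Lemma profile_sublinear f :
  planar_homogeneous f -> continuous_h3 f -> sublinear (profile f).
Proof.
  intros Hh Hf eps Heps.
  destruct (Hf (mkh3 0 1 0) eps Heps) as [d [Hd H]].
  exists (/ d). intros s Hs.
  pose proof (Rinv_0_lt_compat d Hd).
  assert (Hs0 : s <> 0) by (intros ->; rewrite Rabs_R0 in Hs; lra).
  assert (Hinv : Rabs (/ s - 0) < d).
  { rewrite Rminus_0_r, Rabs_inv.
    replace d with (/ / d) by (field; lra).
    apply Rinv_lt_contravar; [apply Rmult_lt_0_compat|]; lra. }
  specialize (H (mkh3 (/ s) 1 0) Hinv); simpl in H.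
  rewrite !Rminus_diag, !Rabs_R0 in H. specialize (H Hd Hd).
  assert (Hline : f (mkh3 1 s 0) = s * f (mkh3 (/ s) 1 0)).
  { rewrite <- (Hh s (/ s) 1 0 0). do 2 f_equal; field; auto. }
  unfold profile. rewrite Hline.
  replace ((s * f (mkh3 (/ s) 1 0) - f (mkh3 0 1 0) * s) / Rabs s)
    with ((f (mkh3 (/ s) 1 0) - f (mkh3 0 1 0)) * (s / Rabs s))
    by (field; apply Rabs_no_R0; auto).
  unfold Rdiv. rewrite !Rabs_mult, Rabs_inv, Rabs_Rabsolu, Rinv_r, Rmult_1_r
    by (apply Rabs_no_R0; auto).
  exact H.
Qed.

Theorem mainTheorem15 :
  (forall (a : R) (c : R -> R) (zeta : h3 -> R),
     continuity c -> sublinear c ->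
     (forall x y z, x <> 0 -> zeta (mkh3 x y z) = c (y / x) * x + a * y) ->
     (forall y z, zeta (mkh3 0 y z) = a * y) ->
     continuous_h3 zeta /\ lie_quasi_state zeta /\ Ad_invariant zeta)
  /\
  (forall zeta : h3 -> R,
     continuous_h3 zeta -> lie_quasi_state zeta -> Ad_invariant zeta ->
     exists (a : R) (c : R -> R),
       continuity c /\ sublinear c /\
       (forall x y z, x <> 0 -> zeta (mkh3 x y z) = c (y / x) * x + a * y) /\
       (forall y z, zeta (mkh3 0 y z) = a * y)).
Proof.
  split.
  - intros a c zeta Hc Hsub Hoff Hon.
    pose proof (model_planar_homogeneous a c zeta Hoff Hon) as Hh.
    split; [|split].
    + exact (model_continuous a c zeta Hoff Hon Hc Hsub).
    + exact (planar_homogeneous_quasi_state zeta Hh).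
    + exact (planar_homogeneous_Ad_invariant zeta Hh).
  - intros zeta Hcont Hq HAd.
    pose proof (quasi_state_Ad_invariant_planar_homogeneous zeta Hq HAd) as Hh.
    exists (zeta (mkh3 0 1 0)), (profile zeta).
    split; [|split; [|split]].
    + exact (profile_continuous zeta Hcont).
    + exact (profile_sublinear zeta Hh Hcont).
    + intros x y z Hx. exact (planar_homogeneous_off_axis zeta Hh x y z Hx).
    + intros y z. exact (planar_homogeneous_on_axis zeta Hh y z).
Qed.
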